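(* For every $i\in\mathbb N$, the subgroup $G_i^\infty=\langle a_i,a_{i+1},\dots\rangle$ of $G'$ is undistorted: for every element of $G_i^\infty$, its word length with respect to $\{a_i,a_{i+1},\dots\}$ equals its word length in $G'$ with respect to $\{a_0,a_1,\dots\}$.
   Context: Fix an integer $p\ge20$. $G'=\langle a_0,a_1,a_2,\dots\mid a_j^{-1}a_{j-1}a_j=a_{j-1}^p\ (j\ge1)\rangle$, with word metric relative to $\{a_0,a_1,\dots\}$. *)

From mathcomp Require Import all_boot.
Set Implicit Arguments. Unset Strict Implicit. Unset Printing Implicit Defensive.

(* A letter (j, false) stands for a_j, and (j, true) for a_j^{-1}. *)
Definition letter := (nat * bool)%type.
Definition word := seq letter.

Definition linv (x : letter) : letter := (x.1, ~~ x.2).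

(* Defining relators of G' : a_j^{-1} a_{j-1} a_j = a_{j-1}^p, j >= 1,
   together with the free-group cancellations x x^{-1} = 1. *)
Inductive base_rel (p : nat) : word -> word -> Prop :=
| br_cancel (x : letter) : base_rel p [:: x; linv x] [::]
| br_relator (j : nat) : 0 < j ->
    base_rel p [:: (j, true); (j.-1, false); (j, false)] (nseq p (j.-1, false)).

Inductive Gequiv (p : nat) : word -> word -> Prop :=
| ge_step (u v l r : word) : base_rel p l r -> Gequiv p (u ++ l ++ v) (u ++ r ++ v)
| ge_refl (w : word) : Gequiv p w w
| ge_sym (w1 w2 : word) : Gequiv p w1 w2 -> Gequiv p w2 w1
| ge_trans (w1 w2 w3 : word) : Gequiv p w1 w2 -> Gequiv p w2 w3 -> Gequiv p w1 w3.

Definition geq_idx (i : nat) : pred letter := fun x => i <= x.1.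

Definition wordlen (p : nat) (S : pred letter) (w : word) (n : nat) : Prop :=
  (exists w' : word, all S w' /\ size w' = n /\ Gequiv p w' w) /\
  (forall w' : word, all S w' -> Gequiv p w' w -> n <= size w').

From mathcomp Require Import all_boot.

(* The subgroup G_i = <a_i, a_(i+1), ...> of G' is a retract of G': deleting
   every letter a_j^(+-1) with j < i respects the defining relations (a
   relator a_j^-1 a_(j-1) a_j = a_(j-1)^p either survives intact, or becomes
   a_j^-1 a_j = 1, or disappears), so it induces an endomorphism of G' that is
   the identity on G_i and never increases word length.  Such a
   length-nonincreasing retraction onto the words in a generating subset S
   forces the S-length of any S-word to coincide with its length in G'. *)

Lemma Gequiv_ctx p a b u v : Gequiv p u v -> Gequiv p (a ++ u ++ b) (a ++ v ++ b).
Proof.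
elim=> {u v} [u v l r hr|w|w1 w2 _ IH|w1 w2 w3 _ IH1 _ IH2].
- by have := ge_step (a ++ u) (v ++ b) hr; rewrite -!catA.
- exact: ge_refl.
- exact: ge_sym.
- exact: ge_trans IH2.
Qed.

Lemma Gequiv_morph p (f : word -> word) :
  (forall u v, f (u ++ v) = f u ++ f v) ->
  (forall l r, base_rel p l r -> Gequiv p (f l) (f r)) ->
  forall u v, Gequiv p u v -> Gequiv p (f u) (f v).
Proof.
move=> fcat frel u v; elim=> {u v} [u v l r hr|w|w1 w2 _ IH|w1 w2 w3 _ IH1 _ IH2].
- by rewrite !fcat; apply: Gequiv_ctx; apply: frel.
- exact: ge_refl.
- exact: ge_sym.
- exact: ge_trans IH2.
Qed.

Lemma filter_geq_rel p i l r : base_rel p l r ->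
  Gequiv p (filter (geq_idx i) l) (filter (geq_idx i) r).
Proof.
rewrite /geq_idx; case=> [[j b]|j hj] /=.
  case: (i <= j) => /=; last exact: ge_refl.
  exact: (ge_step [::] [::] (br_cancel p (j, b))).
rewrite filter_nseq /=.
case: (leqP i j.-1) => [lt_ij1|gt_ij1] /=.
  have -> : i <= j by apply: leq_trans lt_ij1 (leq_pred _).
  by have := ge_step [::] [::] (br_relator p hj); rewrite /= cats0 mul1n.
case: (leqP i j) => _ /=; last exact: ge_refl.
exact: (ge_step [::] [::] (br_cancel p (j, true))).
Qed.

Lemma filter_geq p i u v : Gequiv p u v ->
  Gequiv p (filter (geq_idx i) u) (filter (geq_idx i) v).
Proof. exact/Gequiv_morph/filter_geq_rel/filter_cat. Qed.

Lemma wordlen_retract p (S : pred letter) (retr : word -> word) (w : word) n :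
  (forall u v, Gequiv p u v -> Gequiv p (retr u) (retr v)) ->
  (forall u, all S (retr u)) -> (forall u, size (retr u) <= size u) -> retr w = w ->
  wordlen p S w n <-> wordlen p predT w n.
Proof.
move=> retr_equiv retr_S retr_size retr_w; split.
- case=> [[w' [S_w' [size_w' eq_w']]] minS]; split.
    by exists w'; rewrite all_predT.
  move=> w'' _ eq_w''.
  have eq_rw'' : Gequiv p (retr w'') w by rewrite -retr_w; apply: retr_equiv.
  exact: leq_trans (minS _ (retr_S _) eq_rw'') (retr_size _).
- case=> [[w' [_ [size_w' eq_w']]] minT]; split; last first.
    by move=> w'' _; apply: minT; rewrite all_predT.
  have eq_rw' : Gequiv p (retr w') w by rewrite -retr_w; apply: retr_equiv.
  exists (retr w'); split; first exact: retr_S.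
  split=> //; apply/eqP; rewrite eqn_leq -{1}size_w' retr_size.
  by apply: minT eq_rw'; rewrite all_predT.
Qed.

Theorem corollary5p3 (p : nat) (hp : 20 <= p) (i : nat) (w : word) :
  all (geq_idx i) w ->
  forall n : nat, wordlen p (geq_idx i) w n <-> wordlen p predT w n.
Proof.
move=> w_high n; apply: (@wordlen_retract p _ (filter (geq_idx i))).
- exact: filter_geq.
- exact: filter_all.
- by move=> u; rewrite size_filter count_size.
- exact/all_filterP.
Qed.
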